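(* Let $S$ be a string of length $n$ and $1\le\tau\le n$. Let $\mathrm{ID}:[1..n-\tau+1]\to\mathbb{Z}$ be any function such that $\mathrm{ID}(j)$ depends only on $S[j..j+\tau-1]$, i.e. $S[j..j+\tau-1]=S[k..k+\tau-1]$ implies $\mathrm{ID}(j)=\mathrm{ID}(k)$. Define $$P=\left\{j\in[1..n-\tau]\;\middle|\;\exists \ell\in[j-\tau+1..j]:\ \mathrm{ID}(j)=\min_{k\in[\ell..\ell+\tau-1]}\mathrm{ID}(k)\right\}.$$ Then $P$ is a $(2\tau,2\tau)$-partitioning set of $S$.
   Context: $[a..b]=\{a,\dots,b\}$. A prefix of length $y\ge1$ of a string $W$ is a period of $W$ if $W[x]=W[x+y]$ for all $1\le x\le |W|-y$; $\rho_W$ is the shortest period length, and $W$ is periodic if $\rho_W\le |W|/2$. For $1\le\tau'\le\delta\le n$, a set $P\subseteq[n]$ is a $(\tau',\delta)$-partitioning set of $S$ if (1) for any $i,j\in[1+\delta..n-\delta]$ with $S[i-\delta..i+\delta]=S[j-\delta..j+\delta]$ we have $i\in P\Leftrightarrow j\in P$; and (2) for any two consecutive elements $p_i<p_{i+1}$ of $P\cup\{1,n+1\}$, either $p_{i+1}-p_i\le\tau'$, or $p_{i+1}-p_i>\tau'$ and $u=S[p_i..p_{i+1}-1]$ is periodic with $\rho_u\le\tau'$. *)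

(* Strings are 1-based: a string S of length n over an
   alphabet T is a function S : nat -> T of which only S 1, ..., S n matter. *)
From mathcomp Require Import all_boot all_order all_algebra.
Set Implicit Arguments. Unset Strict Implicit. Unset Printing Implicit Defensive.

(* y is a period of u = S[a..b] (|u| = b - a + 1):
   1 <= y and u[x] = u[x+y] for 1 <= x <= |u| - y,
   i.e. S x = S (x + y) for a <= x and x + y <= b. *)
Definition is_period (T : Type) (S : nat -> T) (a b y : nat) : Prop :=
  1 <= y /\ forall x, a <= x -> x + y <= b -> S x = S (x + y).

Definition shortest_period (T : Type) (S : nat -> T) (a b rho : nat) : Prop :=
  is_period S a b rho /\ forall y, is_period S a b y -> rho <= y.

(* u = S[a..b] is periodic (rho_u <= |u|/2) with rho_u <= t *)
Definition periodic_with_period_le (T : Type) (S : nat -> T) (a b t : nat) : Prop :=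
  exists rho, shortest_period S a b rho /\ 2 * rho <= b.+1 - a /\ rho <= t.

Definition partitioning_set (T : Type) (S : nat -> T) (n tau' delta : nat)
    (P : nat -> Prop) : Prop :=
  (forall p, P p -> 1 <= p <= n) /\
  (forall i j, 1 + delta <= i <= n - delta -> 1 + delta <= j <= n - delta ->
     (forall t, t <= 2 * delta -> S (i - delta + t) = S (j - delta + t)) ->
     (P i <-> P j)) /\
  (let Q := fun p => P p \/ p = 1 \/ p = n.+1 in
   forall a b, Q a -> Q b -> a < b -> (forall c, a < c < b -> ~ Q c) ->
     b - a <= tau' \/ (tau' < b - a /\ periodic_with_period_le S a b.-1 tau')).

(* The rule "j is in P iff ID j is a minimum of some length-tau window of ID
   values containing j" looks only at the ID values of the positions within
   distance tau - 1 of j, and each of them is determined by tau letters of S;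
   so membership depends only on S[j-2tau..j+2tau].  On the other hand, every window
   of tau consecutive positions contains a minimiser of its own ID values,
   which lies in P, so P leaves no gap longer than 2tau. *)
From mathcomp Require Import all_boot all_order all_algebra.
From mathcomp Require Import zify.
Import Order.TTheory GRing.Theory Num.Theory.

Lemma exists_argmin_interval {d : Order.disp_t} {R : orderType d}
    (f : nat -> R) (a b : nat) :
  a <= b ->
  exists2 k, a <= k <= b & forall x, a <= x <= b -> (f k <= f x)%O.
Proof.
move=> le_ab.
have a_in : a < b.+1 by [].
case: (@arg_minP _ R 'I_b.+1 (Ordinal a_in) (fun i => a <= i) (fun i => f i)) => //.
move=> k /= le_ak kmin; exists k; first by rewrite le_ak -ltnS ltn_ord.
move=> x /andP[le_ax le_xb].
by apply: (kmin (Ordinal (le_xb : x < b.+1))).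
Qed.

Section WindowMinimizers.

Variables (T : eqType) (S : nat -> T) (n tau : nat) (ID : nat -> int).

Hypothesis ID_local : forall j k, 1 <= j <= n - tau + 1 -> 1 <= k <= n - tau + 1 ->
  (forall t, t < tau -> S (j + t) = S (k + t)) -> ID j = ID k.

Definition window_minimizer (j : nat) : Prop :=
  1 <= j <= n - tau /\
  exists l, j < l + tau /\ l <= j /\
    1 <= l /\ l + tau - 1 <= n - tau + 1 /\
    (forall k, l <= k <= l + tau - 1 -> (ID j <= ID k)%R).

Lemma window_minimizer_range j : window_minimizer j -> 1 <= j <= n.
Proof. by move=> [j_range _]; lia. Qed.

Section SameContext.

Variables (r i j : nat).
Hypotheses (i_inner : r < i /\ i + r <= n) (j_inner : r < j /\ j + r <= n).
Hypothesis same_context : forall t, t <= 2 * r -> S (i - r + t) = S (j - r + t).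

Lemma ID_eq_in_context k k' :
  k' + i = k + j -> i - r <= k -> k + tau <= i + r + 1 -> ID k = ID k'.
Proof.
move=> shift le_k k_small; apply: ID_local; [lia | lia |] => t lt_t_tau.
have -> : k + t = i - r + (k + t - (i - r)) by lia.
have -> : k' + t = j - r + (k + t - (i - r)) by lia.
by apply: same_context; lia.
Qed.

Lemma window_minimizer_in_context :
  2 * tau <= r -> window_minimizer i -> window_minimizer j.
Proof.
move=> le_2tau_r [i_range [l [lt_i_l [le_l_i [l_ge1 [l_dom l_min]]]]]].
split; first lia.
exists (l + j - i); do 4 (split; first lia).
move=> k k_win.
have -> : ID j = ID i by apply/esym/ID_eq_in_context; lia.
have -> : ID k = ID (k + i - j) by apply/esym/ID_eq_in_context; lia.
by apply: l_min; lia.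
Qed.

End SameContext.

Lemma window_minimizer_local r i j :
  2 * tau <= r -> 1 + r <= i <= n - r -> 1 + r <= j <= n - r ->
  (forall t, t <= 2 * r -> S (i - r + t) = S (j - r + t)) ->
  window_minimizer i <-> window_minimizer j.
Proof.
move=> le_2tau_r i_range j_range same_context.
have i_inner : r < i /\ i + r <= n by lia.
have j_inner : r < j /\ j + r <= n by lia.
split; first exact: window_minimizer_in_context same_context le_2tau_r.
have same_context' t : t <= 2 * r -> S (j - r + t) = S (i - r + t).
  by move=> le_t; rewrite same_context.
exact: window_minimizer_in_context same_context' le_2tau_r.
Qed.

Lemma exists_window_minimizer a :
  0 < tau -> a + 2 * tau <= n -> exists2 j, a < j <= a + tau & window_minimizer j.
Proof.
move=> tau_gt0 a_small.
have [j j_win j_min] := exists_argmin_interval ID (a + 1) (a + tau) ltac:(lia).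
exists j; first lia.
split; first lia.
exists (a + 1); do 4 (split; first lia).
move=> k k_win; apply: j_min; lia.
Qed.

Lemma window_minimizer_partitioning tau' delta :
  0 < tau -> 2 * tau <= tau' -> 2 * tau <= delta ->
  partitioning_set S n tau' delta window_minimizer.
Proof.
move=> tau_gt0 le_2tau_tau' le_2tau_delta.
split; first exact: window_minimizer_range.
split; first by move=> i j; apply: window_minimizer_local.
move=> Q a b Qa Qb lt_ab no_Q_between; left.
have a_ge1 : 1 <= a by case: Qa => [/window_minimizer_range | [] ->]; lia.
have b_le : b <= n.+1 by case: Qb => [/window_minimizer_range | [] ->]; lia.
rewrite leqNgt; apply/negP => gap.
have [j j_gap j_min] := exists_window_minimizer a tau_gt0 ltac:(lia).
by apply: (no_Q_between j); [lia | left].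
Qed.

End WindowMinimizers.

Theorem lemma9 (T : eqType) (S : nat -> T) (n tau : nat) (ID : nat -> int)
  (Htau : 1 <= tau <= n)
  (HID : forall j k, 1 <= j <= n - tau + 1 -> 1 <= k <= n - tau + 1 ->
     (forall t, t < tau -> S (j + t) = S (k + t)) -> ID j = ID k) :
  partitioning_set S n (2 * tau) (2 * tau)
    (fun j => 1 <= j <= n - tau /\
       exists l, j < l + tau /\ l <= j /\
         (* the window [l..l+tau-1] lies in the domain [1..n-tau+1] of ID *)
         1 <= l /\ l + tau - 1 <= n - tau + 1 /\
         (* ID j = min_{k in [l..l+tau-1]} ID k  (note j lies in the window) *)
         (forall k, l <= k <= l + tau - 1 -> (ID j <= ID k)%R)).
Proof.
have tau_gt0 : 0 < tau by case/andP: Htau.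
by apply: window_minimizer_partitioning.
Qed.
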